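(* Let $W$ be a normal WPO-dilator. If $X$ is a well partial order, then $\mathcal T W(X)$ (ordered by $\leq_{\mathcal T W(X)}$) is a well partial order.
   Context: A quasi embedding between partial orders $X,Y$ is a function $f$ with $f(x)\leq_Y f(y)\Rightarrow x\leq_X y$; an embedding also satisfies the converse. $\mathrm{PO}$ is the category of partial orders and quasi embeddings. $[X]^{<\omega}$ denotes the finite subsets of $X$, with $[f]^{<\omega}(a)=\{f(x)\mid x\in a\}$; subsets of partial orders are regarded as suborders and $\iota_a$ denotes an inclusion map. A PO-dilator is a functor $W:\mathrm{PO}\to\mathrm{PO}$ mapping embeddings to embeddings, with a natural transformation $\operatorname{supp}^W:W\Rightarrow[\cdot]^{<\omega}$ such that for every embedding $f:X\to Y$, $\operatorname{rng}(W(f))=\{\sigma\in W(Y)\mid\operatorname{supp}^W_Y(\sigma)\subseteq\operatorname{rng}(f)\}$. For finite $a,b\subseteq X$, $a\leq^{\mathrm{fin}}_X b$ iff every $x\in a$ has some $y\in b$ with $x\leq_X y$. $W$ is normal if $\sigma\leq_{W(X)}\tau$ implies $\operatorname{supp}^W_X(\sigma)\leq^{\mathrm{fin}}_X\operatorname{supp}^W_X(\tau)$. A well partial order is a partial order in which every infinite sequence $x_0,x_1,\dots$ has indices $i<j$ with $x_i\leq x_j$. $W$ is a WPO-dilator if $W(X)$ is a well partial order whenever $X$ is. For a normal PO-dilator $W$ and partial order $X$, the set $\mathcal T W(X)$ and relation $\leq_{\mathcal T W(X)}$ are defined by simultaneous recursion. Terms: (i) $\overline x$ for each $x\in X$; (ii)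 for each finite $a\subseteq\mathcal T W(X)$ on which the restriction of $\leq_{\mathcal T W(X)}$ is a partial order, and each $\sigma\in W(a)$ with $\operatorname{supp}^W_a(\sigma)=a$, a term $\circ(a,\sigma)$. Relation: $s\leq_{\mathcal T W(X)}t$ iff (i') $s=\overline x$, $t=\overline y$, $x\leq_X y$; or (ii') $t=\circ(b,\tau)$ and $s\leq_{\mathcal T W(X)}t'$ for some $t'\in b$; or (iii') $s=\circ(a,\sigma)$, $t=\circ(b,\tau)$, the restriction of $\leq_{\mathcal T W(X)}$ to $a\cup b$ is a partial order, and $W(\iota_a)(\sigma)\leq_{W(a\cup b)}W(\iota_b)(\tau)$ for the inclusions $\iota_a:a\hookrightarrow a\cup b$, $\iota_b:b\hookrightarrow a\cup b$. (The recursion is along the length $l(\overline x)=0$, $l(\circ(a,\sigma))=1+\sum_{r\in a}2\,l(r)$.) *)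

From mathcomp Require Import ssreflect ssrfun ssrbool eqtype ssrnat seq fintype bigop.
From Stdlib Require List.

Set Implicit Arguments.
Unset Strict Implicit.
Unset Printing Implicit Defensive.

Record PO := mkPO {
  carrier :> Type;
  ple : carrier -> carrier -> Prop;
  ple_refl : forall x, ple x x;
  ple_trans : forall x y z, ple x y -> ple y z -> ple x z;
  ple_anti : forall x y, ple x y -> ple y x -> x = y
}.
Arguments ple {p}.

(* quasi embedding: f x <= f y -> x <= y  (morphisms of the category PO) *)
Definition quasi_emb (X Y : PO) (f : X -> Y) : Prop :=
  forall x y : X, ple (f x) (f y) -> ple x y.

Definition embedding (X Y : PO) (f : X -> Y) : Prop :=
  forall x y : X, ple (f x) (f y) <-> ple x y.

(* Finite subsets of X are represented by lists, read as the set of their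
   entries (membership via List.In). *)

Definition fin_le (X : PO) (a b : list X) : Prop :=
  forall x, List.In x a -> exists y, List.In y b /\ ple x y.

Definition wpo (X : PO) : Prop :=
  forall f : nat -> X, exists i j, (i < j)%N /\ ple (f i) (f j).

Record PO_dilator := {
  Wob : PO -> PO;
  Wmap : forall (X Y : PO) (f : X -> Y), quasi_emb f -> Wob X -> Wob Y;
  Wmap_qe : forall (X Y : PO) (f : X -> Y) (Hf : quasi_emb f), quasi_emb (Wmap Hf);
  (* functions are extensional (set-theoretic functions) *)
  Wmap_ext : forall (X Y : PO) (f g : X -> Y) (Hf : quasi_emb f) (Hg : quasi_emb g),
      (forall x, f x = g x) -> forall s, Wmap Hf s = Wmap Hg s;
  Wmap_id : forall (X : PO) (H : quasi_emb (fun x : X => x)) s, Wmap H s = s;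
  Wmap_comp : forall (X Y Z : PO) (f : X -> Y) (g : Y -> Z)
      (Hf : quasi_emb f) (Hg : quasi_emb g) (Hgf : quasi_emb (fun x => g (f x))) s,
      Wmap Hgf s = Wmap Hg (Wmap Hf s);
  Wmap_emb : forall (X Y : PO) (f : X -> Y) (Hf : quasi_emb f),
      embedding f -> embedding (Wmap Hf);
  (* support: a natural transformation W => [.]^{<omega} *)
  supp : forall X : PO, Wob X -> list X;
  supp_nat : forall (X Y : PO) (f : X -> Y) (Hf : quasi_emb f) (s : Wob X) (y : Y),
      List.In y (supp (Wmap Hf s)) <-> exists x, List.In x (supp s) /\ f x = y;
  supp_rng : forall (X Y : PO) (f : X -> Y) (Hf : quasi_emb f), embedding f ->
      forall t : Wob Y,
        (exists s, Wmap Hf s = t) <-> (forall y, List.In y (supp t) -> exists x, f x = y)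
}.

Definition normal (W : PO_dilator) : Prop :=
  forall (X : PO) (s t : Wob W X), ple s t -> fin_le (supp s) (supp t).

Definition WPO_dilator (W : PO_dilator) : Prop :=
  forall X : PO, wpo X -> wpo (Wob W X).

Record is_po (n : nat) (R : 'I_n -> 'I_n -> Prop) : Prop := {
  ispo_refl : forall i, R i i;
  ispo_trans : forall i j l, R i j -> R j l -> R i l;
  ispo_anti : forall i j, R i j -> R j i -> i = j
}.

Definition ordPO (n : nat) (R : 'I_n -> 'I_n -> Prop) (H : is_po R) : PO :=
  @mkPO 'I_n R (ispo_refl H) (ispo_trans H) (ispo_anti H).

Section Terms.
Variables (W : PO_dilator) (X : PO).

(* A term o(a, sigma) is represented by an enumeration
   ts : 'I_k -> raw of the finite set a, a partial order r on 'I_k (which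
   well-formedness forces to be the order induced from a), and
   sigma in W('I_k, r). *)
Inductive raw : Type :=
| Leaf : X -> raw
| Node : forall (k : nat) (r : 'I_k -> 'I_k -> Prop) (Hr : is_po r),
    ('I_k -> raw) -> Wob W (ordPO Hr) -> raw.

(* Equality of terms: identity up to re-enumeration of the finite sets
   (a bijection pi of indices, transported along W(pi)). *)
Fixpoint req (s : raw) : raw -> Prop :=
  match s with
  | Leaf x => fun t => match t with Leaf y => x = y | Node _ _ _ _ _ => False end
  | Node k r Hr ts sg => fun t =>
      match t with
      | Leaf _ => False
      | Node m r' Hr' us tau =>
          exists pi : 'I_k -> 'I_m,
            bijective pi /\
            (forall i, req (ts i) (us (pi i))) /\
            (forall i j, r i j <-> r' (pi i) (pi j)) /\
            exists Hpi : quasi_emb (X := ordPO Hr) (Y := ordPO Hr') pi,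
              Wmap Hpi sg = tau
      end
  end.

Fixpoint size (s : raw) : nat :=
  match s with
  | Leaf _ => 0
  | Node k _ _ ts _ => (\sum_(i < k) 2 * size (ts i)).+1
  end.

(* Clause (iii'): given the relation L (= <=_{TW(X)} on the relevant
   subterms), the union a \cup b is represented (up to isomorphism) by
   'I_n with inclusions ia, ib; the restriction of L to it must be a
   partial order R, and W(ia)(sigma) <= W(ib)(tau) in W(a \cup b). *)
Definition union_le (L : raw -> raw -> Prop)
    (k : nat) (r : 'I_k -> 'I_k -> Prop) (Hr : is_po r) (ts : 'I_k -> raw)
    (sg : Wob W (ordPO Hr))
    (m : nat) (r' : 'I_m -> 'I_m -> Prop) (Hr' : is_po r') (us : 'I_m -> raw)
    (tau : Wob W (ordPO Hr')) : Prop :=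
  exists (n : nat) (R : 'I_n -> 'I_n -> Prop) (HR : is_po R)
         (ia : 'I_k -> 'I_n) (ib : 'I_m -> 'I_n),
    (forall u, (exists i, ia i = u) \/ (exists j, ib j = u)) /\
    injective ia /\ injective ib /\
    (forall i j, ia i = ib j <-> req (ts i) (us j)) /\
    (forall i i', R (ia i) (ia i') <-> L (ts i) (ts i')) /\
    (forall i j, R (ia i) (ib j) <-> L (ts i) (us j)) /\
    (forall i j, R (ib j) (ia i) <-> L (us j) (ts i)) /\
    (forall j j', R (ib j) (ib j') <-> L (us j) (us j')) /\
    exists (Ha : quasi_emb (X := ordPO Hr) (Y := ordPO HR) ia)
           (Hb : quasi_emb (X := ordPO Hr') (Y := ordPO HR) ib),
      ple (Wmap Ha sg) (Wmap Hb tau).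

(* The recursion along the length, implemented with fuel: every recursive
   call is on a pair of strictly smaller total length. *)
Fixpoint lef (fuel : nat) (s t : raw) {struct fuel} : Prop :=
  match fuel with
  | 0 => False
  | fuel'.+1 =>
      match t with
      | Leaf y => match s with Leaf x => ple x y | Node _ _ _ _ _ => False end
      | Node m r' Hr' us tau =>
          (exists j, lef fuel' s (us j)) \/
          match s with
          | Leaf _ => False
          | Node k r Hr ts sg => union_le (lef fuel') ts sg us tau
          end
      end
  end.

Definition TWle (s t : raw) : Prop := lef (size s + size t).+1 s t.

Fixpoint wf (s : raw) : Prop :=
  match s with
  | Leaf _ => True
  | Node k r Hr ts sg =>
      (forall i, wf (ts i)) /\
      (forall i j, req (ts i) (ts j) -> i = j) /\
      (forall i j, r i j <-> TWle (ts i) (ts j)) /\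
      (forall i, List.In i (supp sg))
  end.

(* T W (X), with <=_{TW(X)}, is a well partial order
   (terms are compared up to the term equality req). *)
Definition TW_is_wpo : Prop :=
  (forall s, wf s -> TWle s s) /\
  (forall s t u, wf s -> wf t -> wf u -> TWle s t -> TWle t u -> TWle s u) /\
  (forall s t, wf s -> wf t -> TWle s t -> TWle t s -> req s t) /\
  (forall f : nat -> raw, (forall i, wf (f i)) ->
     exists i j, (i < j)%N /\ TWle (f i) (f j)).

End Terms.

From Pilot Require Import Defs.
From mathcomp Require Import ssreflect ssrfun ssrbool eqtype ssrnat choice fintype bigop.
From mathcomp Require Import zify.
From Stdlib Require Import Classical ClassicalEpsilon ProofIrrelevance.
Set Implicit Arguments.
Unset Strict Implicit.
Unset Printing Implicit Defensive.

(* Nash-Williams' minimal bad sequence argument.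

   First, <=_{TW(X)} is a partial order up to the term equality [req].  The
   key observation is that the comparison W(iota_a)(sigma) <= W(iota_b)(tau) of
   clause (iii') can be evaluated in any partial order into which the children
   of both terms map faithfully, because all such images factor through an
   embedding, which W preserves.  Normality says that in clause (iii') every
   child of s lies below a child of t; hence no term lies below one of its own
   subterms, and transitivity and antisymmetry follow by induction on size.

   Next, let m be a bad sequence of minimal sizes.  The immediate subterms of
   the m i, taken up to [req], form a well partial order A: a bad sequence in A
   could be spliced into m and contradict its minimality.  As X is a wpo, only
   finitely many m i are leaves; coding the children of the others into A gives
   a sequence in the wpo W(A), and a good pair there transports back to a good
   pair of m. *)

Section DilatorFacts.
Variable W : PO_dilator.

Lemma Wmap_compE (A B C : PO) (f : A -> B) (g : B -> C) (h : A -> C)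
  (Hf : quasi_emb f) (Hg : quasi_emb g) (Hh : quasi_emb h) :
  (forall x, g (f x) = h x) -> forall s : Wob W A, Wmap Hg (Wmap Hf s) = Wmap Hh s.
Proof.
move=> E s.
have Hgf : quasi_emb (X:=A) (Y:=C) (fun x => g (f x)) by move=> x y; rewrite !E; apply: Hh.
by rewrite -(Wmap_comp Hf Hg Hgf); apply: Wmap_ext.
Qed.

Lemma embedding_inj (A B : PO) (f : A -> B) : embedding f -> injective f.
Proof. by move=> E x y H; apply: ple_anti; apply/E; rewrite H; exact: ple_refl. Qed.

Lemma Wmap_inj (A B : PO) (f : A -> B) (Hf : quasi_emb f) :
  embedding f -> injective (Wmap (p:=W) Hf).
Proof. by move=> E; apply: embedding_inj; apply: Wmap_emb. Qed.

End DilatorFacts.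

Section FiniteQuotient.
Variables (T : Type) (E : T -> T -> Prop).
Hypotheses (E_refl : forall a, E a a) (E_sym : forall a b, E a b -> E b a)
  (E_trans : forall a b c, E a b -> E b c -> E a c).

Lemma ex_quotient_ord N (f : 'I_N -> T) : exists n (q : 'I_N -> 'I_n),
  (forall u, exists x, q x = u) /\ (forall x y, q x = q y <-> E (f x) (f y)).
Proof.
elim: N f => [|N IH] f; first by exists 0, id; split; [move=> u; exists u|case].
have [n [q [Sq Eq]]] := IH (fun j => f (lift ord_max j)).
case: (classic (exists j, E (f ord_max) (f (lift ord_max j)))) => [[j0 Hj0]|Hn].
- exists n, (fun x => if unlift ord_max x is Some j then q j else q j0); split.
    by move=> u; have [x Hx] := Sq u; exists (lift ord_max x); rewrite liftK.
  move=> x y; case: (unliftP ord_max x) => [j ->|->]; case: (unliftP ord_max y) => [j' ->|->].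
  + exact: Eq.
  + by rewrite Eq; split => H; [exact: E_trans H (E_sym Hj0)|exact: E_trans H Hj0].
  + by rewrite Eq; split => H; [exact: E_trans Hj0 H|exact: E_trans (E_sym Hj0) H].
  + by split => _; [exact: E_refl|].
- exists n.+1, (fun x => if unlift ord_max x is Some j then lift ord_max (q j) else ord_max).
  split.
    move=> u; case: (unliftP ord_max u) => [v ->|->].
      by have [x Hx] := Sq v; exists (lift ord_max x); rewrite liftK Hx.
    by exists ord_max; rewrite unlift_none.
  move=> x y; case: (unliftP ord_max x) => [j ->|->]; case: (unliftP ord_max y) => [j' ->|->].
  + by split => [/lift_inj/Eq //|/Eq ->].
  + split => [H|H]; first by move: (neq_lift ord_max (q j)); rewrite H eqxx.
    by case: Hn; exists j; apply: E_sym.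
  + split => [H|H]; first by move: (neq_lift ord_max (q j')); rewrite -H eqxx.
    by case: Hn; exists j'.
  + by split => _; [exact: E_refl|].
Qed.

Variable L : T -> T -> Prop.

Lemma ex_quotient_ord_po N (f : 'I_N -> T) :
  (forall x, L (f x) (f x)) ->
  (forall x y z, L (f x) (f y) -> L (f y) (f z) -> L (f x) (f z)) ->
  (forall x y, L (f x) (f y) -> L (f y) (f x) -> E (f x) (f y)) ->
  (forall x x' y y', E (f x) (f x') -> E (f y) (f y') -> L (f x) (f y) -> L (f x') (f y')) ->
  exists n (q : 'I_N -> 'I_n) (R : 'I_n -> 'I_n -> Prop) (HR : is_po R),
  (forall u, exists x, q x = u) /\ (forall x y, q x = q y <-> E (f x) (f y)) /\
  (forall x y, R (q x) (q y) <-> L (f x) (f y)).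
Proof.
move=> Lr Lt La LE; have [n [q [Sq Eq]]] := ex_quotient_ord f.
pose R u v := exists x y, q x = u /\ q y = v /\ L (f x) (f y).
have RE x y : R (q x) (q y) <-> L (f x) (f y).
  split=> [[x' [y' [Hx [Hy H]]]]|H]; last by exists x, y.
  by apply: LE H; apply/Eq.
have HR : is_po R.
  split.
  - by move=> u; have [x <-] := Sq u; apply/RE.
  - move=> u v w; have [x <-] := Sq u; have [y <-] := Sq v; have [z <-] := Sq w.
    by move=> /RE H1 /RE H2; apply/RE; exact: Lt H1 H2.
  - move=> u v; have [x <-] := Sq u; have [y <-] := Sq v.
    by move=> /RE H1 /RE H2; apply/Eq; exact: La.
by exists n, q, R, HR.
Qed.

End FiniteQuotient.

Lemma ex_minimal_nat (P : nat -> Prop) :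
  (exists n, P n) -> exists n, P n /\ forall k, P k -> n <= k.
Proof.
move=> exP; pose p n := if excluded_middle_informative (P n) then true else false.
have pP n : p n <-> P n by rewrite /p; case: excluded_middle_informative.
have exp : exists n, p n by case: exP => n /pP; exists n.
case: (ex_minnP exp) => n /pP Pn min.
by exists n; split=> // k /pP; apply: min.
Qed.

Lemma ex_increasing_enum (P : nat -> Prop) : (forall N, exists n, N <= n /\ P n) ->
  exists phi : nat -> nat, (forall i j, i < j -> phi i < phi j) /\ forall i, P (phi i).
Proof.
move=> H; have [c cP] := ClassicalEpsilon.choice _ H.
pose phi := fix phi i := if i is i'.+1 then c (phi i').+1 else c 0.
exists phi; split; last by case=> [|i]; apply: (proj2 (cP _)).
move=> i j; elim: j => [|j IH] //; rewrite ltnS leq_eqVlt => /orP [/eqP ->|/IH Hij].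
  exact: (proj1 (cP _)).
exact: ltn_trans Hij (proj1 (cP _)).
Qed.

Section MinimalBadSequence.
Variables (T : Type) (P : T -> Prop) (le : T -> T -> Prop) (weight : T -> nat).

Definition bad (f : nat -> T) := (forall i, P (f i)) /\ forall i j, i < j -> ~ le (f i) (f j).

Definition agree_below (f g : nat -> T) n := forall i, i < n -> f i = g i.

Lemma ex_minimal_at n f : bad f -> exists g, [/\ bad g, agree_below g f n &
  forall h, bad h -> agree_below h f n -> weight (g n) <= weight (h n)].
Proof.
move=> Bf.
have [w [[g [Bg Ag <-]] min]] := ex_minimal_nat
  (ex_intro (fun w => exists g, [/\ bad g, agree_below g f n & weight (g n) = w]) _
     (ex_intro _ f (And3 Bf (fun _ _ => erefl) erefl))).
by exists g; split=> // h Bh Ah; apply: min; exists h.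
Qed.

Lemma ex_minimal_bad f : bad f -> exists m, bad m /\
  forall n g, bad g -> agree_below g m n -> weight (m n) <= weight (g n).
Proof.
move=> Bf.
have Ex n g : exists g', bad g -> [/\ bad g', agree_below g' g n &
    forall h, bad h -> agree_below h g n -> weight (g' n) <= weight (h n)].
  case: (classic (bad g)) => [Bg|nBg]; last by exists g => /nBg.
  by have [g' Hg'] := ex_minimal_at n Bg; exists g'.
have [next nextP] := ClassicalEpsilon.choice _ (fun n => ClassicalEpsilon.choice _ (Ex n)).
pose F := fix F n := if n is n'.+1 then next n' (F n') else f.
have BF n : bad (F n) by elim: n => [|n IH] //; case: (nextP n _ IH).
have AF j i : i < j -> F j i = F i.+1 i.
  elim: j => [|j IH] //; rewrite ltnS leq_eqVlt => /orP [/eqP ->|Hij] //.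
  by case: (nextP j _ (BF j)) => _ A _; rewrite /= A // IH.
exists (fun i => F i.+1 i); split.
  split=> [i|i j Hij]; first exact: (proj1 (BF i.+1)).
  rewrite -(AF j.+1 i) ?(ltn_trans Hij) //.
  exact: (proj2 (BF j.+1) i j Hij).
move=> n g Bg Ag; case: (nextP n _ (BF n)) => _ _; apply => // i Hi.
by rewrite Ag // AF.
Qed.

End MinimalBadSequence.

Section TermOrder.
Variables (W : PO_dilator) (X : PO).
Local Notation raw := (raw W X).
Local Notation tsize := (@Defs.size W X).
Local Notation TWle := (@TWle W X).
Local Notation req := (@req W X).

Lemma size_child k r Hr (ts : 'I_k -> raw) sg i : tsize (ts i) < tsize (@Node W X k r Hr ts sg).
Proof.
rewrite /= ltnS (bigD1 i) //=.
by apply: leq_trans (leq_addr _ _); rewrite leq_pmull.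
Qed.

Lemma size_two_children k r Hr (ts : 'I_k -> raw) sg i i' :
  tsize (ts i) + tsize (ts i') < tsize (@Node W X k r Hr ts sg).
Proof.
rewrite /= ltnS; case: (eqVneq i i') => [->|ne].
  by rewrite addnn -mul2n (bigD1 i') //= leq_addr.
rewrite (bigD1 i) //= (bigD1 i') /=; last by rewrite eq_sym.
by rewrite addnA; apply: leq_trans (leq_addr _ _); apply: leq_add; rewrite leq_pmull.
Qed.

Definition child_of (a s : raw) : Prop :=
  if s is Node _ _ _ ts _ then exists i, a = ts i else False.

Lemma size_child_pair s t a b :
  child_of a s \/ child_of a t -> child_of b s \/ child_of b t ->
  tsize a + tsize b < tsize s + tsize t.
Proof.
move=> [Ha|Ha] [Hb|Hb].
- case: s Ha Hb => [x []|k r Hr ts sg [i ->] [i' ->]].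
  exact: leq_trans (size_two_children _ _ i i') (leq_addr _ _).
- case: s Ha => [x []|k r Hr ts sg [i ->]]; case: t Hb => [y []|m r' Hr' us tau [j ->]].
  by rewrite -addSn leq_add ?size_child // ltnW ?size_child.
- case: s Hb => [x []|k r Hr ts sg [i ->]]; case: t Ha => [y []|m r' Hr' us tau [j ->]].
  by rewrite addnC -addSn leq_add ?size_child // ltnW ?size_child.
- case: t Ha Hb => [y []|m r' Hr' us tau [j ->] [j' ->]].
  exact: leq_trans (size_two_children _ _ j j') (leq_addl _ _).
Qed.

Lemma union_le_ext (L L' : raw -> raw -> Prop) N k r Hr ts sg m r' Hr' us tau :
  tsize (@Node W X k r Hr ts sg) + tsize (@Node W X m r' Hr' us tau) <= N ->
  (forall a b, tsize a + tsize b < N -> (L a b <-> L' a b)) ->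
  union_le L ts sg us tau <-> union_le L' ts sg us tau.
Proof.
move=> Hsz E; have {}E a b := fun Ha Hb => E a b (leq_trans (size_child_pair Ha Hb) Hsz).
have E1 i i' : L (ts i) (ts i') <-> L' (ts i) (ts i').
  by apply: E; left; [exists i|exists i'].
have E2 i j : L (ts i) (us j) <-> L' (ts i) (us j).
  by apply: E; [left; exists i|right; exists j].
have E3 i j : L (us j) (ts i) <-> L' (us j) (ts i).
  by apply: E; [right; exists j|left; exists i].
have E4 j j' : L (us j) (us j') <-> L' (us j) (us j').
  by apply: E; right; [exists j|exists j'].
split=> -[n [R [HR [ia [ib [C [Ia [Ib [Q [H1 [H2 [H3 [H4 H5]]]]]]]]]]]]];
  exists n, R, HR, ia, ib; do 4 (split; first done).
- by do 4 (split; first by move=> ? ?; rewrite ?H1 ?H2 ?H3 ?H4 ?E1 ?E2 ?E3 ?E4).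
- by do 4 (split; first by move=> ? ?; rewrite ?H1 ?H2 ?H3 ?H4 -?E1 -?E2 -?E3 -?E4).
Qed.

Lemma lef_fuel n n' s t : tsize s + tsize t < n -> n <= n' -> (lef n s t <-> lef n' s t).
Proof.
elim: n n' s t => [|n IH] n' s t // Hsz; case: n' => // n' Hn.
rewrite ltnS in Hsz Hn.
case: t Hsz => [y|m r' Hr' us tau] Hsz; first by [].
have Ech j : lef n s (us j) <-> lef n' s (us j).
  by apply: IH Hn; apply: leq_trans Hsz; rewrite ltn_add2l size_child.
case: s Hsz Ech => [x|k r Hr ts sg] Hsz Ech /=.
  by split=> -[[j /Ech Hj]|[]]; left; exists j.
have Eu : union_le (lef n) ts sg us tau <-> union_le (lef n') ts sg us tau.
  by apply: union_le_ext Hsz _ => a b Hab; apply: IH Hab Hn.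
by split=> -[[j /Ech Hj]|/Eu Hu]; [left; exists j|right|left; exists j|right].
Qed.

Lemma lefE n s t : tsize s + tsize t < n -> (lef n s t <-> TWle s t).
Proof.
move=> H; rewrite /TWle; case: (leqP n (tsize s + tsize t).+1) => Hn.
  exact: lef_fuel.
by symmetry; apply: lef_fuel => //; apply: ltnW.
Qed.

Lemma TWle_node s m r' Hr' (us : 'I_m -> raw) tau :
  TWle s (@Node W X m r' Hr' us tau) <->
  (exists j, TWle s (us j)) \/
  if s is Node _ _ _ ts sg then union_le TWle ts sg us tau else False.
Proof.
set N := tsize s + tsize (Node us tau).
have Ech j : lef N s (us j) <-> TWle s (us j).
  by apply: lefE; rewrite /N ltn_add2l size_child.
rewrite /TWle -/N /=; case: s @N Ech => [x|k r Hr ts sg] N Ech.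
  by split=> -[[j /Ech Hj]|[]]; left; exists j.
have Eu : union_le (lef N) ts sg us tau <-> union_le TWle ts sg us tau.
  by apply: union_le_ext (leqnn N) _ => a b; apply: lefE.
by split=> -[[j /Ech Hj]|/Eu Hu]; [left; exists j|right|left; exists j|right].
Qed.

Lemma TWle_child s m r' Hr' (us : 'I_m -> raw) tau j :
  TWle s (us j) -> TWle s (@Node W X m r' Hr' us tau).
Proof. by move=> H; apply/TWle_node; left; exists j. Qed.

Lemma TWle_union k r Hr (ts : 'I_k -> raw) sg m r' Hr' (us : 'I_m -> raw) tau :
  union_le TWle ts sg us tau -> TWle (@Node W X k r Hr ts sg) (@Node W X m r' Hr' us tau).
Proof. by move=> H; apply/TWle_node; right. Qed.

Lemma req_refl s : req s s.
Proof.
elim/raw_ind: s => [x|k r Hr ts IH sg] //=.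
exists id; split; first by exists id.
do 2 (split; first by []).
have H : quasi_emb (X:=ordPO Hr) (Y:=ordPO Hr) id by [].
by exists H; apply: Wmap_id.
Qed.

Lemma req_sym s t : req s t -> req t s.
Proof.
elim/raw_ind: s t => [x|k r Hr ts IH sg] [y|m r' Hr' us tau] //=.
move=> [pi [[g g1 g2] [Hc [Hrr [Hpi E]]]]].
exists g; split; first by exists pi.
split; first by move=> u; apply: IH; rewrite -{2}(g2 u).
have Hg' u v : r' u v <-> r (g u) (g v) by rewrite Hrr !g2.
split; first exact: Hg'.
have Hg : quasi_emb (X:=ordPO Hr') (Y:=ordPO Hr) g by move=> u v /Hg'.
exists Hg; rewrite -E (Wmap_compE (h := id) _ _ (fun x y (H : ple x y) => H)) //.
exact: Wmap_id.
Qed.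

Lemma req_trans s t u : req s t -> req t u -> req s u.
Proof.
elim/raw_ind: s t u => [x|k r Hr ts IH sg] [y|m r' Hr' us tau] [z|p r'' Hr'' vs rho] //=;
  try by move=> -> ->.
move=> [pi [[g g1 g2] [Hc [Hrr [Hpi E]]]]] [pi' [[g' g1' g2'] [Hc' [Hrr' [Hpi' E']]]]].
exists (pi' \o pi); split.
  by exists (g \o g') => i /=; rewrite ?g1 ?g1' ?g2' ?g2.
split; first by move=> i; apply: IH (Hc i) (Hc' _).
split; first by move=> i j; rewrite Hrr Hrr'.
have H : quasi_emb (X:=ordPO Hr) (Y:=ordPO Hr'') (pi' \o pi) by move=> a b /Hrr' /Hrr.
by exists H; rewrite -E' -E; symmetry; exact: Wmap_compE.
Qed.

Lemma size_req s t : req s t -> tsize s = tsize t.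
Proof.
elim/raw_ind: s t => [x|k r Hr ts IH sg] [y|m r' Hr' us tau] //= [pi [Hb [Hc _]]].
congr (_.+1); rewrite [RHS](reindex pi) /=; last exact: onW_bij.
by apply: eq_bigr => i _; rewrite (IH i _ (Hc i)).
Qed.

Lemma req_leaf (x : X) t : req (Leaf W x) t -> t = Leaf W x.
Proof. by case: t => [y|] //= ->. Qed.

Lemma union_le_req (L L' : raw -> raw -> Prop) N
    k r Hr (ts : 'I_k -> raw) sg m r' Hr' (us : 'I_m -> raw) tau
    k2 r2 Hr2 (ts2 : 'I_k2 -> raw) sg2 m2 r2' Hr2' (us2 : 'I_m2 -> raw) tau2 :
  tsize (@Node W X k r Hr ts sg) + tsize (@Node W X m r' Hr' us tau) <= N ->
  (forall a b a' b', tsize a + tsize b < N -> req a a' -> req b b' -> (L a b <-> L' a' b')) ->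
  req (Node ts sg) (@Node W X k2 r2 Hr2 ts2 sg2) ->
  req (Node us tau) (@Node W X m2 r2' Hr2' us2 tau2) ->
  union_le L ts sg us tau -> union_le L' ts2 sg2 us2 tau2.
Proof.
move=> Hsz EL [rho [[h h1 h2] [Hcs [Hrs [Hrho Es]]]]] [pi [[g g1 g2] [Hct [Hrt [Hpi Et]]]]].
move=> [n [R [HR [ia [ib [C [Ia [Ib [Q [H1 [H2 [H3 [H4 [Ha [Hb Hle]]]]]]]]]]]]]]].
have Rts i : req (ts (h i)) (ts2 i) by have := Hcs (h i); rewrite h2.
have Rus j : req (us (g j)) (us2 j) by have := Hct (g j); rewrite g2.
have Lpair a b a' b' : req a a' -> req b b' ->
    child_of a (Node ts sg) \/ child_of a (Node us tau) ->
    child_of b (Node ts sg) \/ child_of b (Node us tau) -> (L a b <-> L' a' b').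
  by move=> Ra Rb Ca Cb; apply: EL Ra Rb; apply: leq_trans (size_child_pair Ca Cb) Hsz.
exists n, R, HR, (ia \o h), (ib \o g).
split.
  move=> u; case: (C u) => [[i <-]|[j <-]]; [left; exists (rho i)|right; exists (pi j)];
  by rewrite /= ?h1 ?g1.
split; first by move=> a b /Ia /(can_inj h2).
split; first by move=> a b /Ib /(can_inj g2).
split.
  move=> i j; rewrite /= Q; split => H.
    exact: req_trans (req_sym (Rts i)) (req_trans H (Rus j)).
  exact: req_trans (Rts i) (req_trans H (req_sym (Rus j))).
split; first by move=> i i'; rewrite /= H1; apply: Lpair (Rts i) (Rts i') _ _; left; eexists.
split; first by move=> i j; rewrite /= H2; apply: Lpair (Rts i) (Rus j) _ _; [left|right]; eexists.
split; first by move=> i j; rewrite /= H3; apply: Lpair (Rus j) (Rts i) _ _; [right|left]; eexists.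
split; first by move=> j j'; rewrite /= H4; apply: Lpair (Rus j) (Rus j') _ _; right; eexists.
have Ha' : quasi_emb (X:=ordPO Hr2) (Y:=ordPO HR) (ia \o h).
  by move=> a b /Ha /Hrs; rewrite !h2.
have Hb' : quasi_emb (X:=ordPO Hr2') (Y:=ordPO HR) (ib \o g).
  by move=> a b /Hb /Hrt; rewrite !g2.
exists Ha', Hb'.
rewrite -Es -Et (Wmap_compE Hrho Ha' Ha); last by move=> x; rewrite /= h1.
by rewrite (Wmap_compE Hpi Hb' Hb) // => x; rewrite /= g1.
Qed.

Lemma TWle_req_lt N s t s' t' : tsize s + tsize t < N -> req s s' -> req t t' ->
  TWle s t -> TWle s' t'.
Proof.
elim: N s t s' t' => [|N IH] // s t s' t'; rewrite ltnS => Hsz Hs Ht.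
have IHiff a b a' b' : tsize a + tsize b < N -> req a a' -> req b b' ->
    (TWle a b <-> TWle a' b').
  move=> Hab Ha Hb; split; first exact: IH.
  by apply: IH; rewrite -?(size_req Ha) -?(size_req Hb) //; apply: req_sym.
case: t Hsz Ht => [y|m r' Hr' us tau] Hsz Ht.
  rewrite (req_leaf Ht); case: s Hsz Hs => [x|k r Hr ts sg] Hsz Hs //.
  by rewrite (req_leaf Hs).
case: t' Ht => [y'|m' r'2 Hr'2 us' tau'] Ht //.
have [pi [_ [Hc _]]] := Ht.
move/TWle_node => [[j Hj]|Hu].
  apply: (TWle_child _ (j:=pi j)); apply: (IH s (us j)) (Hs) (Hc j) Hj.
  by apply: leq_trans Hsz; rewrite ltn_add2l size_child.
case: s Hsz Hs Hu => [x|k r Hr ts sg] Hsz Hs // Hu.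
case: s' Hs => [x'|k' r2 Hr2 ts' sg'] Hs //.
exact/TWle_union/(union_le_req Hsz IHiff Hs Ht Hu).
Qed.

Lemma TWle_reqE s t s' t' : req s s' -> req t t' -> (TWle s t <-> TWle s' t').
Proof.
move=> Hs Ht; split; first exact: (@TWle_req_lt (tsize s + tsize t).+1).
by apply: (@TWle_req_lt (tsize s' + tsize t').+1); try apply: req_sym.
Qed.

Lemma wf_child k r Hr (ts : 'I_k -> raw) sg i : wf (@Node W X k r Hr ts sg) -> wf (ts i).
Proof. by case=> H _; apply: H. Qed.

Lemma TWle_refl s : wf s -> TWle s s.
Proof.
case: s => [x _|k r Hr ts sg [_ [Hd [Hrr _]]]]; first exact: ple_refl.
apply: TWle_union; exists k, r, Hr, id, id.
split; first by move=> u; left; exists u.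
do 2 (split; first by []).
split; first by move=> i j; split => [->|/Hd //]; apply: req_refl.
do 4 (split; first by move=> i j; apply: Hrr).
have H : quasi_emb (X:=ordPO Hr) (Y:=ordPO Hr) id by [].
by exists H, H; apply: ple_refl.
Qed.

Lemma TWle_child_refl k r Hr (ts : 'I_k -> raw) sg i :
  wf (@Node W X k r Hr ts sg) -> TWle (ts i) (Node ts sg).
Proof. by move=> Hw; apply: (TWle_child _ (j:=i)); apply/TWle_refl/(wf_child _ Hw). Qed.

Definition union_rep k (ts : 'I_k -> raw) m (us : 'I_m -> raw)
  n (R : 'I_n -> 'I_n -> Prop) (ia : 'I_k -> 'I_n) (ib : 'I_m -> 'I_n) : Prop :=
  (forall u, (exists i, ia i = u) \/ (exists j, ib j = u)) /\
  injective ia /\ injective ib /\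
  (forall i j, ia i = ib j <-> req (ts i) (us j)) /\
  (forall i i', R (ia i) (ia i') <-> TWle (ts i) (ts i')) /\
  (forall i j, R (ia i) (ib j) <-> TWle (ts i) (us j)) /\
  (forall i j, R (ib j) (ia i) <-> TWle (us j) (ts i)) /\
  (forall j j', R (ib j) (ib j') <-> TWle (us j) (us j')).

Lemma union_leP k r (Hr : is_po r) (ts : 'I_k -> raw) sg
  m r' (Hr' : is_po r') (us : 'I_m -> raw) tau :
  union_le TWle ts sg us tau <->
  exists n (R : 'I_n -> 'I_n -> Prop) (HR : is_po R) ia ib, union_rep ts us R ia ib /\
    exists (Ha : quasi_emb (X:=ordPO Hr) (Y:=ordPO HR) ia)
           (Hb : quasi_emb (X:=ordPO Hr') (Y:=ordPO HR) ib),
      ple (Wmap Ha sg) (Wmap Hb tau).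
Proof.
split.
  move=> [n [R [HR [ia [ib [C [Ia [Ib [Q [H1 [H2 [H3 [H4 H5]]]]]]]]]]]]].
  by exists n, R, HR, ia, ib; split.
move=> [n [R [HR [ia [ib [[C [Ia [Ib [Q [H1 [H2 [H3 H4]]]]]]] H5]]]]]].
by exists n, R, HR, ia, ib.
Qed.

Definition joint_rep k (ts : 'I_k -> raw) m (us : 'I_m -> raw)
  (Y : PO) (ja : 'I_k -> Y) (jb : 'I_m -> Y) : Prop :=
  (forall i j, req (ts i) (us j) -> ja i = jb j) /\
  (forall i i', ple (ja i) (ja i') <-> TWle (ts i) (ts i')) /\
  (forall i j, ple (ja i) (jb j) <-> TWle (ts i) (us j)) /\
  (forall i j, ple (jb j) (ja i) <-> TWle (us j) (ts i)) /\
  (forall j j', ple (jb j) (jb j') <-> TWle (us j) (us j')).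

Lemma joint_rep_sym k (ts : 'I_k -> raw) m (us : 'I_m -> raw) (Y : PO) ja jb :
  joint_rep ts us (Y:=Y) ja jb -> joint_rep us ts jb ja.
Proof.
move=> [Q [H1 [H2 [H3 H4]]]]; split; last by [].
by move=> j i H; symmetry; apply/Q/req_sym.
Qed.

Lemma union_rep_joint k (ts : 'I_k -> raw) m (us : 'I_m -> raw) n R (HR : is_po R) ia ib :
  union_rep ts us (n:=n) R ia ib -> joint_rep (Y:=ordPO HR) ts us ia ib.
Proof. by move=> [_ [_ [_ [Q H]]]]; split=> // i j /Q. Qed.

Lemma joint_rep_quasi_l k r (Hr : is_po r) (ts : 'I_k -> raw) m (us : 'I_m -> raw) (Y : PO) ja jb :
  joint_rep ts us (Y:=Y) ja jb -> (forall i i', r i i' <-> TWle (ts i) (ts i')) ->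
  quasi_emb (X:=ordPO Hr) (Y:=Y) ja.
Proof. by move=> [_ [H1 _]] E i i' /H1 /E. Qed.

Lemma joint_rep_quasi_r m r (Hr : is_po r) k (ts : 'I_k -> raw) (us : 'I_m -> raw) (Y : PO) ja jb :
  joint_rep ts us (Y:=Y) ja jb -> (forall j j', r j j' <-> TWle (us j) (us j')) ->
  quasi_emb (X:=ordPO Hr) (Y:=Y) jb.
Proof. by move=> [_ [_ [_ [_ H4]]]] E i i' /H4 /E. Qed.

Lemma union_rep_factor k (ts : 'I_k -> raw) m (us : 'I_m -> raw) n R (HR : is_po R) ia ib
    (Y : PO) (ja : 'I_k -> Y) (jb : 'I_m -> Y) :
  union_rep ts us (n:=n) R ia ib -> joint_rep ts us ja jb ->
  exists h : ordPO HR -> Y,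
    [/\ embedding h, forall i, h (ia i) = ja i & forall j, h (ib j) = jb j].
Proof.
move=> [C [Ia [Ib [Q [H1 [H2 [H3 H4]]]]]]] [Qj [J1 [J2 [J3 J4]]]].
have Ex u : exists y : Y, (forall i, ia i = u -> y = ja i) /\ (forall j, ib j = u -> y = jb j).
  case: (C u) => [[i <-]|[j <-]].
  - exists (ja i); split; first by move=> i' /Ia ->.
    by move=> j /esym /Q /Qj.
  - exists (jb j); split; last by move=> j' /Ib ->.
    by move=> i /Q /Qj ->.
have [h hP] := ClassicalEpsilon.choice _ Ex.
have ha i : h (ia i) = ja i by apply: (proj1 (hP _)).
have hb j : h (ib j) = jb j by apply: (proj2 (hP _)).
exists h; split=> // u v.
by case: (C u) => [[i <-]|[j <-]]; case: (C v) => [[i' <-]|[j' <-]];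
  rewrite ?ha ?hb /= ?J1 ?J2 ?J3 ?J4 ?H1 ?H2 ?H3 ?H4.
Qed.

Lemma Wle_rep_indep k r (Hr : is_po r) (ts : 'I_k -> raw) (sg : Wob W (ordPO Hr))
    m r' (Hr' : is_po r') (us : 'I_m -> raw) (tau : Wob W (ordPO Hr'))
    n R (HR : is_po R) ia ib (Y : PO) (ja : 'I_k -> Y) (jb : 'I_m -> Y) :
  union_rep ts us (n:=n) R ia ib -> joint_rep ts us ja jb ->
  forall (Ha : quasi_emb (X:=ordPO Hr) (Y:=ordPO HR) ia)
         (Hb : quasi_emb (X:=ordPO Hr') (Y:=ordPO HR) ib)
         (Hja : quasi_emb (X:=ordPO Hr) (Y:=Y) ja)
         (Hjb : quasi_emb (X:=ordPO Hr') (Y:=Y) jb),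
  ple (Wmap Ha sg) (Wmap Hb tau) <-> ple (Wmap Hja sg) (Wmap Hjb tau).
Proof.
move=> U J Ha Hb Hja Hjb.
have [h [Eh ha hb]] := union_rep_factor HR U J.
have Hh : quasi_emb h by move=> u v /Eh.
by rewrite -(Wmap_emb Hh Eh) (Wmap_compE Ha Hh Hja ha) (Wmap_compE Hb Hh Hjb hb).
Qed.

Fixpoint subterm (v t : raw) : Prop :=
  if t is Node _ _ _ ts _ then exists i, v = ts i \/ subterm v (ts i) else False.

Lemma subterm_child m r Hr (vs : 'I_m -> raw) d l t :
  subterm (@Node W X m r Hr vs d) t -> subterm (vs l) t.
Proof.
elim/raw_ind: t => [x|k r' Hr' ts IH sg] //= [i [E|H]]; exists i; right.
  by rewrite -E; exists l; left.
exact: IH.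
Qed.

Hypothesis HN : normal W.

Lemma union_le_child k r Hr (ts : 'I_k -> raw) sg m r' (Hr' : is_po r') (us : 'I_m -> raw)
    (tau : Wob W (ordPO Hr')) :
  wf (@Node W X k r Hr ts sg) -> union_le TWle ts sg us tau ->
  forall i, exists j, TWle (ts i) (us j).
Proof.
move=> [_ [_ [_ Hsupp]]] /union_leP [n [R [HR [ia [ib [U [Ha [Hb Hle]]]]]]]] i.
have [_ [_ [_ [_ [_ [H2 _]]]]]] := U.
have [y [Hy Hiy]] : exists y, List.In y (supp (Wmap Hb tau)) /\ @ple (ordPO HR) (ia i) y.
  by apply: (HN Hle); apply/supp_nat; exists i.
by move/supp_nat: Hy Hiy => [j [_ <-]] /H2; exists j.
Qed.

Lemma TWle_subterm v t : wf t -> subterm v t -> ~ TWle t v.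
Proof.
elim/raw_ind: v t => [y|m r' Hr' vs IH d] [x|k r Hr ts sg] // Wt Dt; first by [].
move/TWle_node=> [[l Hl]|Hu]; first exact: IH l _ Wt (subterm_child l Dt) Hl.
have [i Hi] := Dt; have [l Hl] := union_le_child Wt Hu i.
apply: (IH l _ (wf_child _ Wt) _ Hl).
by case: Hi => [<-|Hi]; [exists l; left|exact: (subterm_child l (t := ts i) Hi)].
Qed.

Lemma TWle_not_child k r Hr (ts : 'I_k -> raw) sg i :
  wf (@Node W X k r Hr ts sg) -> ~ TWle (Node ts sg) (ts i).
Proof. by move=> Wt; apply: TWle_subterm Wt _; exists i; left. Qed.

Lemma union_le_anti k r Hr (ts : 'I_k -> raw) sg m r' Hr' (us : 'I_m -> raw) tau :
  wf (@Node W X k r Hr ts sg) -> wf (@Node W X m r' Hr' us tau) ->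
  union_le TWle ts sg us tau -> union_le TWle us tau ts sg -> req (Node ts sg) (Node us tau).
Proof.
move=> Ws Wt /union_leP [n [R [HR [ia [ib [U1 [Ha [Hb L1]]]]]]]].
move=> /union_leP [n2 [R2 [HR2 [ia2 [ib2 [U2 [Ha2 [Hb2 L2]]]]]]]].
have J1 := joint_rep_sym (union_rep_joint HR U1).
have {}L2 := proj1 (Wle_rep_indep tau sg U2 J1 Ha2 Hb2 Hb Ha) L2.
have E : Wmap Ha sg = Wmap Hb tau := ple_anti L1 L2.
move: U1 Ws Wt => [_ [Ia [Ib [Q [H1 [_ [_ H4]]]]]]] [_ [_ [Ers Sps]]] [_ [_ [Ert Spt]]].
(* Equal elements of W have equal supports, so [ia] and [ib] have the same range. *)
have Ex1 i : exists j, ib j = ia i.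
  have : List.In (ia i) (supp (Wmap Hb tau)) by rewrite -E; apply/supp_nat; exists i.
  by move/supp_nat => [j [_ Ej]]; exists j.
have Ex2 j : exists i, ia i = ib j.
  have : List.In (ib j) (supp (Wmap Ha sg)) by rewrite E; apply/supp_nat; exists j.
  by move/supp_nat => [i [_ Ei]]; exists i.
have [pi piP] := ClassicalEpsilon.choice _ Ex1.
have [pinv pinvP] := ClassicalEpsilon.choice _ Ex2.
exists pi; split.
  by exists pinv => [i|j]; [apply: Ia; rewrite pinvP piP|apply: Ib; rewrite piP pinvP].
split; first by move=> i; apply/Q; rewrite piP.
have Epi i i' : r i i' <-> r' (pi i) (pi i') by rewrite Ers -H1 -!piP H4 Ert.
split; first exact: Epi.
have Hpi : quasi_emb (X:=ordPO Hr) (Y:=ordPO Hr') pi by move=> a b /Epi.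
have Eb : embedding (X:=ordPO Hr') (Y:=ordPO HR) ib by move=> a b; rewrite /= H4 Ert.
by exists Hpi; apply: (Wmap_inj (Hf:=Hb) Eb); rewrite (Wmap_compE Hpi Hb Ha piP).
Qed.

Section Representations.
Variable S : raw -> Prop.
Hypothesis S_refl : forall a, S a -> TWle a a.
Hypothesis S_trans : forall a b c, S a -> S b -> S c -> TWle a b -> TWle b c -> TWle a c.
Hypothesis S_anti : forall a b, S a -> S b -> TWle a b -> TWle b a -> req a b.

Lemma ex_quotient_rep N (f : 'I_N -> raw) : (forall x, S (f x)) ->
  exists n (q : 'I_N -> 'I_n) (R : 'I_n -> 'I_n -> Prop) (HR : is_po R),
  (forall u, exists x, q x = u) /\ (forall x y, q x = q y <-> req (f x) (f y)) /\
  (forall x y, R (q x) (q y) <-> TWle (f x) (f y)).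
Proof.
move=> Sf; apply: ex_quotient_ord_po; [exact: req_refl|exact: req_sym|exact: req_trans|..].
- by move=> x; apply: S_refl.
- by move=> x y z; apply: S_trans.
- by move=> x y; apply: S_anti.
- by move=> x x' y y' Hx Hy /(TWle_reqE Hx Hy).
Qed.

Lemma ex_union_rep k (ts : 'I_k -> raw) m (us : 'I_m -> raw) :
  (forall i, S (ts i)) -> (forall j, S (us j)) ->
  (forall i i', req (ts i) (ts i') -> i = i') -> (forall j j', req (us j) (us j') -> j = j') ->
  exists n (R : 'I_n -> 'I_n -> Prop) (HR : is_po R) ia ib, union_rep ts us R ia ib.
Proof.
move=> S1 S2 D1 D2.
pose f x := match split x with inl i => ts i | inr j => us j end.
have Sf x : S (f x) by rewrite /f; case: (split x).
have [n [q [R [HR [Sq [Eq RE]]]]]] := ex_quotient_rep Sf.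
have fl i : f (lshift m i) = ts i by rewrite /f (unsplitK (inl i)).
have fr j : f (rshift k j) = us j by rewrite /f (unsplitK (inr j)).
exists n, R, HR, (fun i => q (lshift m i)), (fun j => q (rshift k j)).
split.
  move=> u; have [x <-] := Sq u; rewrite -(splitK x).
  by case: (split x) => [i|j] /=; [left; exists i|right; exists j].
split; first by move=> i i' /Eq; rewrite !fl => /D1.
split; first by move=> j j' /Eq; rewrite !fr => /D2.
split; first by move=> i j; rewrite /= Eq fl fr.
by do 3 (split; first by move=> ? ?; rewrite /= RE ?fl ?fr); move=> ? ?; rewrite /= RE !fr.
Qed.

Lemma ex_joint_rep3 k (ts : 'I_k -> raw) m (us : 'I_m -> raw) p (vs : 'I_p -> raw) :
  (forall i, S (ts i)) -> (forall j, S (us j)) -> (forall l, S (vs l)) ->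
  exists n (R : 'I_n -> 'I_n -> Prop) (HR : is_po R) ja jb jc,
    [/\ joint_rep (Y:=ordPO HR) ts us ja jb, joint_rep (Y:=ordPO HR) us vs jb jc &
        joint_rep (Y:=ordPO HR) ts vs ja jc].
Proof.
move=> S1 S2 S3.
pose f (x : 'I_(k + (m + p))) := match split x with
  | inl i => ts i | inr y => match split y with inl j => us j | inr l => vs l end end.
have Sf x : S (f x) by rewrite /f; case: (split x) => // y; case: (split y).
have [n [q [R [HR [_ [Eq RE]]]]]] := ex_quotient_rep Sf.
have f1 i : f (lshift (m + p) i) = ts i by rewrite /f (unsplitK (inl i)).
have f2 j : f (rshift k (lshift p j)) = us j.
  by rewrite /f (unsplitK (inr (lshift p j))) (unsplitK (inl j)).
have f3 l : f (rshift k (rshift m l)) = vs l.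
  by rewrite /f (unsplitK (inr (rshift m l))) (unsplitK (inr l)).
exists n, R, HR, (fun i => q (lshift (m + p) i)), (fun j => q (rshift k (lshift p j))),
  (fun l => q (rshift k (rshift m l))).
by split; (split; first by move=> ? ? ?; apply/Eq; rewrite ?f1 ?f2 ?f3);
  do 3 (split; first by move=> ? ?; rewrite /= RE ?f1 ?f2 ?f3);
  move=> ? ?; rewrite /= RE ?f1 ?f2 ?f3.
Qed.

Lemma union_le_trans k r Hr (ts : 'I_k -> raw) sg m r' Hr' (us : 'I_m -> raw) tau
    p r'' Hr'' (vs : 'I_p -> raw) rho :
  wf (@Node W X k r Hr ts sg) -> wf (@Node W X m r' Hr' us tau) ->
  wf (@Node W X p r'' Hr'' vs rho) ->
  (forall i, S (ts i)) -> (forall j, S (us j)) -> (forall l, S (vs l)) ->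
  union_le TWle ts sg us tau -> union_le TWle us tau vs rho -> union_le TWle ts sg vs rho.
Proof.
move=> [_ [D1 [Ers _]]] [_ [_ [Ert _]]] [_ [D3 [Eru _]]] S1 S2 S3.
move=> /union_leP [n1 [R1 [HR1 [ia1 [ib1 [U1 [Ha1 [Hb1 L1]]]]]]]].
move=> /union_leP [n2 [R2 [HR2 [ia2 [ib2 [U2 [Ha2 [Hb2 L2]]]]]]]].
have [n [R [HR [ja [jb [jc [Y1 Y2 Y3]]]]]]] := ex_joint_rep3 S1 S2 S3.
have Hja := joint_rep_quasi_l (Hr:=Hr) Y1 Ers.
have Hjb := joint_rep_quasi_r (Hr:=Hr') Y1 Ert.
have Hjc := joint_rep_quasi_r (Hr:=Hr'') Y2 Eru.
have L13 : ple (Wmap Hja sg) (Wmap Hjc rho).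
  apply: ple_trans (proj1 (Wle_rep_indep sg tau U1 Y1 Ha1 Hb1 Hja Hjb) L1) _.
  exact: (proj1 (Wle_rep_indep tau rho U2 Y2 Ha2 Hb2 Hjb Hjc) L2).
have [n3 [R3 [HR3 [ia3 [ib3 U3]]]]] := ex_union_rep S1 S3 D1 D3.
have Ha3 := joint_rep_quasi_l (Hr:=Hr) (union_rep_joint HR3 U3) Ers.
have Hb3 := joint_rep_quasi_r (Hr:=Hr'') (union_rep_joint HR3 U3) Eru.
apply/union_leP; exists n3, R3, HR3, ia3, ib3; split => //.
by exists Ha3, Hb3; apply/(Wle_rep_indep sg rho U3 Y3 Ha3 Hb3 Hja Hjc).
Qed.

End Representations.

(* Transitivity and antisymmetry are proved together, by induction on a size
   bound: clause (iii') needs the children involved to form a partial order. *)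
Definition trans_below B := forall s t u, wf s -> wf t -> wf u ->
  tsize s < B -> tsize t < B -> tsize u < B -> TWle s t -> TWle t u -> TWle s u.

Definition anti_below B := forall s t, wf s -> wf t ->
  tsize s < B -> tsize t < B -> TWle s t -> TWle t s -> req s t.

Lemma anti_below_of_trans B : trans_below B -> anti_below B.
Proof.
move=> TrB [x|k r Hr ts sg] [y|m r' Hr' us tau] Ws Wt Bs Bt //.
  by move=> Hxy Hyx; apply: ple_anti.
move=> Hst Hts; have Hst' := Hst; have Hts' := Hts.
move/TWle_node: Hst => [[j Hj]|U1].
  case: (TWle_not_child (i:=j) Wt); apply: TrB Hts Hj => //.
    exact: wf_child Wt.
  exact: ltn_trans (size_child _ _ j) Bt.
move/TWle_node: Hts => [[i Hi]|U2].
  case: (TWle_not_child (i:=i) Ws); apply: TrB Hst' Hi => //.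
    exact: wf_child Ws.
  exact: ltn_trans (size_child _ _ i) Bs.
exact: union_le_anti.
Qed.

Lemma union_le_trans_below B k r Hr (ts : 'I_k -> raw) sg m r' Hr' (us : 'I_m -> raw) tau
    p r'' Hr'' (vs : 'I_p -> raw) rho :
  trans_below B -> anti_below B ->
  wf (@Node W X k r Hr ts sg) -> wf (@Node W X m r' Hr' us tau) ->
  wf (@Node W X p r'' Hr'' vs rho) ->
  tsize (Node ts sg) <= B -> tsize (Node us tau) <= B -> tsize (Node vs rho) <= B ->
  union_le TWle ts sg us tau -> union_le TWle us tau vs rho -> union_le TWle ts sg vs rho.
Proof.
move=> TrB AnB Ws Wt Wu Bs Bt Bu.
pose S a := wf a /\ tsize a < B.
have S_refl a : S a -> TWle a a by case=> Wa _; apply: TWle_refl.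
have S_trans a b c : S a -> S b -> S c -> TWle a b -> TWle b c -> TWle a c.
  by move=> [? ?] [? ?] [? ?]; apply: TrB.
have S_anti a b : S a -> S b -> TWle a b -> TWle b a -> req a b.
  by move=> [? ?] [? ?]; apply: AnB.
have S_child k' r0 Hr0 (ws : 'I_k' -> raw) om : wf (@Node W X k' r0 Hr0 ws om) ->
    tsize (Node ws om) <= B -> forall i, S (ws i).
  by move=> Ww Bw i; split; [exact: wf_child Ww|exact: leq_trans (size_child _ _ i) Bw].
exact: (union_le_trans S_refl S_trans S_anti Ws Wt Wu
  (S_child _ _ _ _ _ Ws Bs) (S_child _ _ _ _ _ Wt Bt) (S_child _ _ _ _ _ Wu Bu)).
Qed.

Lemma trans_below_succ B : trans_below B -> anti_below B -> trans_below B.+1.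
Proof.
move=> TrB AnB.
suff main M s t u : tsize s + tsize t + tsize u < M -> wf s -> wf t -> wf u ->
    tsize s <= B -> tsize t <= B -> tsize u <= B -> TWle s t -> TWle t u -> TWle s u.
  by move=> s t u *; apply: (main (tsize s + tsize t + tsize u).+1).
elim: M s t u => [|M IH] // s t u HM Ws Wt Wu Bs Bt Bu Hst Htu.
case: u HM Wu Bu Htu => [z|p r'' Hr'' vs rho] HM Wu Bu Htu.
  case: t HM Wt Bt Hst Htu => [y|m r' Hr' us tau] HM Wt Bt Hst Htu //.
  case: s HM Ws Bs Hst => [x|k r Hr ts sg] HM Ws Bs Hst //.
  exact: ple_trans Hst Htu.
have Sv l : tsize (vs l) < tsize (Node vs rho) := size_child _ _ l.
move/TWle_node: Htu => [[l Hl]|Htu].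
  apply: (TWle_child _ (j:=l)); apply: (IH s t (vs l)) (wf_child _ Wu) _ _ _ Hst Hl => //;
    have := Sv l; lia.
case: t HM Wt Bt Hst Htu => [y|m r' Hr' us tau] HM Wt Bt Hst Htu //.
have Su j : tsize (us j) < tsize (Node us tau) := size_child _ _ j.
move/TWle_node: Hst => [[j Hj]|Hst].
  have [l Hl] := union_le_child Wt Htu j.
  apply: (TWle_child _ (j:=l)).
  apply: (IH s (us j) (vs l)) (wf_child _ Wt) (wf_child _ Wu) _ _ _ Hj Hl => //;
    have := Sv l; have := Su j; lia.
case: s HM Ws Bs Hst => [x|k r Hr ts sg] HM Ws Bs Hst //.
exact/TWle_union/(union_le_trans_below TrB AnB Ws Wt Wu Bs Bt Bu Hst Htu).
Qed.

Lemma trans_below_all B : trans_below B.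
Proof. by elim: B => [|B IH] //; apply: trans_below_succ IH (anti_below_of_trans IH). Qed.

Lemma TWle_trans s t u : wf s -> wf t -> wf u -> TWle s t -> TWle t u -> TWle s u.
Proof.
move=> Ws Wt Wu; apply: (@trans_below_all (tsize s + tsize t + tsize u).+1) => //; lia.
Qed.

Lemma TWle_anti s t : wf s -> wf t -> TWle s t -> TWle t s -> req s t.
Proof.
move=> Ws Wt; apply: (anti_below_of_trans (@trans_below_all (tsize s + tsize t).+1)) => //; lia.
Qed.

Lemma TWle_of_joint_rep k r Hr (ts : 'I_k -> raw) sg m r' Hr' (us : 'I_m -> raw) tau
    (Y : PO) (ja : 'I_k -> Y) (jb : 'I_m -> Y)
    (Hja : quasi_emb (X:=ordPO Hr) ja) (Hjb : quasi_emb (X:=ordPO Hr') jb) :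
  wf (@Node W X k r Hr ts sg) -> wf (@Node W X m r' Hr' us tau) ->
  joint_rep ts us ja jb -> ple (Wmap Hja sg) (Wmap Hjb tau) -> TWle (Node ts sg) (Node us tau).
Proof.
move=> Ws Wt J Hle; have [_ [D1 [Ers _]]] := Ws; have [_ [D2 [Ert _]]] := Wt.
have [n [R [HR [ia [ib U]]]]] :=
  ex_union_rep (S:=@wf W X) TWle_refl TWle_trans TWle_anti
    (fun i => wf_child i Ws) (fun j => wf_child j Wt) D1 D2.
have Ha := joint_rep_quasi_l (Hr:=Hr) (union_rep_joint HR U) Ers.
have Hb := joint_rep_quasi_r (Hr:=Hr') (union_rep_joint HR U) Ert.
apply/TWle_union/union_leP; exists n, R, HR, ia, ib; split=> //.
by exists Ha, Hb; apply/(Wle_rep_indep sg tau U J).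
Qed.

End TermOrder.

Section MinimalBadTerms.
Variables (W : PO_dilator) (X : PO).
Hypothesis HN : normal W.
Local Notation raw := (raw W X).
Local Notation tsize := (@Defs.size W X).
Local Notation TWle := (@TWle W X).
Local Notation req := (@req W X).
Local Notation bad := (bad (@wf W X) TWle).

Variable m : nat -> raw.
Hypothesis m_bad : bad m.
Hypothesis m_min : forall n g, bad g -> agree_below g m n -> tsize (m n) <= tsize (g n).

Definition at_pos (p : nat * nat) (t : raw) : Prop :=
  if m p.1 is Node k _ _ ts _ then exists2 j : 'I_k, val j = p.2 & ts j = t else False.

Lemma at_pos_fun p t u : at_pos p t -> at_pos p u -> t = u.
Proof.
rewrite /at_pos; case: (m p.1) => // k r Hr ts sg [j Ej <-] [j' Ej' <-].
by congr ts; apply: val_inj; rewrite Ej Ej'.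
Qed.

Lemma at_pos_node i k r Hr (ts : 'I_k -> raw) sg j :
  m i = @Node W X k r Hr ts sg -> at_pos (i, val j) (ts j).
Proof. by rewrite /at_pos /= => ->; exists j. Qed.

Lemma at_pos_below p t : at_pos p t -> [/\ wf t, TWle t (m p.1) & tsize t < tsize (m p.1)].
Proof.
rewrite /at_pos; have := proj1 m_bad p.1.
case: (m p.1) => // k r Hr ts sg Wn [j _ <-].
by split; [exact: wf_child Wn|exact: TWle_child_refl|exact: size_child].
Qed.

(* Each [req]-class of immediate subterms of the [m i] is represented by its
   position of least [pickle] code. *)
Definition canonical_pos (p : nat * nat) : Prop :=
  exists2 t, at_pos p t & forall p' t', at_pos p' t' -> req t' t -> pickle p <= pickle p'.

Definition child_class := {p : nat * nat | canonical_pos p}.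

Definition represents (a : child_class) (t : raw) : Prop :=
  exists2 t', at_pos (sval a) t' & req t' t.

Lemma ex_represents p t : at_pos p t -> exists a, represents a t.
Proof.
move=> Hpt.
have [c [[p' [t' [<- Ht' R']]] min]] := ex_minimal_nat
  (ex_intro (fun c => exists p' t', [/\ pickle p' = c, at_pos p' t' & req t' t]) _
    (ex_intro _ p (ex_intro _ t (And3 erefl Hpt (req_refl t))))).
have Cp' : canonical_pos p'.
  exists t' => // p'' t'' H'' R''; apply: min; exists p'', t''.
  by split=> //; apply: req_trans R'' R'.
by exists (exist _ p' Cp'); exists t'.
Qed.

Lemma represents_self (a : child_class) : exists t, at_pos (sval a) t /\ represents a t.
Proof. by have [t Ht _] := svalP a; exists t; split=> //; exists t => //; apply: req_refl. Qed.

Lemma class_eq a b x y : represents a x -> represents b y -> req x y -> a = b.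
Proof.
case: a b => [p [t Ht Cp]] [q [u Hu Cq]] [x' /= Hx' Rx] [y' /= Hy' Ry] Rxy.
rewrite -(at_pos_fun Ht Hx') in Rx; rewrite -(at_pos_fun Hu Hy') in Ry.
have Rtu : req t u by apply: req_trans Rx (req_trans Rxy (req_sym Ry)).
have Epq : p = q.
  apply: (pcan_inj (@pickleK_inv _)); apply/eqP; rewrite eqn_leq.
  by rewrite (Cp q u Hu (req_sym Rtu)) (Cq p t Ht Rtu).
by subst q; congr exist; apply: proof_irrelevance.
Qed.

Definition class_le (a b : child_class) : Prop :=
  exists t u, [/\ at_pos (sval a) t, at_pos (sval b) u & TWle t u].

Lemma class_leE a b x y : represents a x -> represents b y -> (class_le a b <-> TWle x y).
Proof.
move=> [x' Hx Rx] [y' Hy Ry]; rewrite -(TWle_reqE Rx Ry).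
split=> [[t [u [Ht Hu Htu]]]|Hxy]; last by exists x', y'.
by rewrite (at_pos_fun Hx Ht) (at_pos_fun Hy Hu).
Qed.

Lemma class_le_refl a : class_le a a.
Proof.
have [t [Ht Rt]] := represents_self a; apply/(class_leE Rt Rt)/TWle_refl.
by case: (at_pos_below Ht).
Qed.

Lemma class_le_trans a b c : class_le a b -> class_le b c -> class_le a c.
Proof.
have [t [Ht Rt]] := represents_self a; have [u [Hu Ru]] := represents_self b.
have [v [Hv Rv]] := represents_self c.
rewrite (class_leE Rt Ru) (class_leE Ru Rv) (class_leE Rt Rv).
move=> Htu Huv; apply: (TWle_trans HN _ _ _ Htu Huv);
  by [case: (at_pos_below Ht)|case: (at_pos_below Hu)|case: (at_pos_below Hv)].
Qed.

Lemma class_le_anti a b : class_le a b -> class_le b a -> a = b.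
Proof.
have [t [Ht Rt]] := represents_self a; have [u [Hu Ru]] := represents_self b.
rewrite (class_leE Rt Ru) (class_leE Ru Rt) => Htu Hut; apply: class_eq Rt Ru _.
by apply: (TWle_anti HN _ _ Htu Hut); [case: (at_pos_below Ht)|case: (at_pos_below Hu)].
Qed.

Definition children_po : PO := mkPO class_le_refl class_le_trans class_le_anti.

(* A bad sequence of children, spliced after [m 0], ..., [m (i0 - 1)] where [i0]
   is the least index of a parent, is bad and smaller than [m] at [i0]. *)
Lemma children_wpo : wpo children_po.
Proof.
move=> g; apply: NNPP => g_bad.
have [t tP] := ClassicalEpsilon.choice _ (fun n => represents_self (g n)).
pose idx n := (sval (g n)).1.
have t_below n : [/\ wf (t n), TWle (t n) (m (idx n)) & tsize (t n) < tsize (m (idx n))].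
  by case: (tP n) => Ht _; apply: at_pos_below.
have t_bad i j : i < j -> ~ TWle (t i) (t j).
  case: (tP i) (tP j) => _ Ri [_ Rj] Hij /(class_leE Ri Rj) Hle.
  by apply: g_bad; exists i, j.
have [i0 [[n0 En0] idx_min]] := ex_minimal_nat (ex_intro (fun k => exists n, idx n = k) _
  (ex_intro _ 0 erefl)).
pose h l := if l < i0 then m l else t (n0 + (l - i0)).
have h_bad : bad h.
  split=> [l|l l' Hll'].
    by rewrite /h; case: ifP => _; [exact: (proj1 m_bad)|case: (t_below (n0 + (l - i0)))].
  rewrite /h; case: ifP => Hl; case: ifP => Hl'.
  - exact: (proj2 m_bad).
  - set n := n0 + (l' - i0); case: (t_below n) => Wt Htm _ Hmt.
    have Hn : i0 <= idx n by apply: idx_min; exists n.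
    apply: (proj2 m_bad l (idx n)); first by lia.
    exact: (TWle_trans HN (proj1 m_bad _) Wt (proj1 m_bad _) Hmt Htm).
  - by lia.
  - by apply: t_bad; lia.
have h_agree : agree_below h m i0 by move=> l Hl; rewrite /h Hl.
have := m_min h_bad h_agree.
rewrite /h ltnn subnn addn0 -En0; case: (t_below n0) => _ _; lia.
Qed.

Lemma represents_joint k (ts : 'I_k -> raw) l (us : 'I_l -> raw) io io' :
  (forall i, represents (io i) (ts i)) -> (forall j, represents (io' j) (us j)) ->
  joint_rep ts us (Y:=children_po) io io'.
Proof.
move=> Rt Ru; split; first by move=> i j; apply: class_eq.
by do 3 (split; first by move=> ? ?; apply: class_leE); move=> ? ?; apply: class_leE.
Qed.

Lemma ex_children_code k r Hr (ts : 'I_k -> raw) sg :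
  wf (@Node W X k r Hr ts sg) -> (forall i, exists a, represents a (ts i)) ->
  exists (io : 'I_k -> children_po) (Hio : quasi_emb (X:=ordPO Hr) (Y:=children_po) io),
    forall i, represents (io i) (ts i).
Proof.
move=> [_ [_ [Er _]]] Ex; have [io ioP] := ClassicalEpsilon.choice _ Ex.
have Hio : quasi_emb (X:=ordPO Hr) (Y:=children_po) io.
  by move=> i j /(class_leE (ioP i) (ioP j)) /Er.
by exists io, Hio.
Qed.

Hypothesis HX : wpo X.

Lemma eventually_node : exists N, forall n, N <= n ->
  exists k r Hr (ts : 'I_k -> raw) sg, m n = @Node W X k r Hr ts sg.
Proof.
apply: NNPP => noN.
have leaves N : exists n, N <= n /\ exists x, m n = Leaf W x.
  apply: NNPP => H; apply: noN; exists N => n Hn.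
  case E: (m n) => [x|k r Hr ts sg]; last by exists k, r, Hr, ts, sg.
  by case: H; exists n; split=> //; exists x.
have [phi [phi_incr phiP]] := ex_increasing_enum leaves.
have [x xP] := ClassicalEpsilon.choice _ phiP.
have [i [j [Hij Hle]]] := HX x.
by apply: (proj2 m_bad (phi i) (phi j) (phi_incr _ _ Hij)); rewrite !xP.
Qed.

Hypothesis HW : WPO_dilator W.

Lemma minimal_bad_absurd : False.
Proof.
have [N nodeN] := eventually_node.
have code l : exists w : Wob W children_po, exists k r Hr (ts : 'I_k -> raw) sg io
    (Hio : quasi_emb (X:=ordPO Hr) (Y:=children_po) io),
    [/\ m (N + l) = @Node W X k r Hr ts sg, forall i, represents (io i) (ts i) & w = Wmap Hio sg].
  have [k [r [Hr [ts [sg E]]]]] := nodeN (N + l) (leq_addr _ _).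
  have Wn := proj1 m_bad (N + l); rewrite E in Wn.
  have [io [Hio ioP]] := ex_children_code Wn (fun i => ex_represents (at_pos_node _ E)).
  by exists (Wmap Hio sg), k, r, Hr, ts, sg, io, Hio.
have [w wP] := ClassicalEpsilon.choice _ code.
have [l [l' [Hll' Hw]]] := HW children_wpo w.
have [k [r [Hr [ts [sg [io [Hio [E Rio Ew]]]]]]]] := wP l.
have [k' [r' [Hr' [us [tau [io' [Hio' [E' Rio' Ew']]]]]]]] := wP l'.
apply: (proj2 m_bad (N + l) (N + l')); first by rewrite ltn_add2l.
have Ws := proj1 m_bad (N + l); have Wt := proj1 m_bad (N + l').
rewrite E E' in Ws Wt *.
by apply: (TWle_of_joint_rep HN Ws Wt (represents_joint Rio Rio')); rewrite -Ew -Ew'.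
Qed.

End MinimalBadTerms.

Theorem proposition2p7 (W : PO_dilator) (HN : normal W) (HW : WPO_dilator W)
  (X : PO) (HX : wpo X) : TW_is_wpo W X.
Proof.
split; first exact: TWle_refl.
split; first exact: TWle_trans HN.
split; first exact: TWle_anti HN.
move=> f wf_f; apply: NNPP => f_good.
have f_bad : bad (@wf W X) (@TWle W X) f by split=> // i j Hij Hle; apply: f_good; exists i, j.
have [m [m_bad m_min]] := ex_minimal_bad (@Defs.size W X) f_bad.
exact: (minimal_bad_absurd HN m_bad m_min HX HW).
Qed.
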